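(* Let $A$ be a row-finite $\omega\times\omega$ complex matrix, $g\in\mathbb{C}^{\omega}$, and let $Q$ be a nonsingular row-finite matrix such that $H=QA=(h_{ij})$ is in quasi-Hermite form. Let $W$ be the set of indices of zero rows of $H$, $J=\{j_0<j_1<\cdots\}=\omega\setminus W$ the indices of nonzero rows, $\mu_i=\ell(H_{j_i})$, and $\mathbf{k}=Qg$. Then: (a) the system $Ay=g$ (with unknown $y\in\mathbb{C}^\omega$) has a solution if and only if $\mathbf{k}_w=0$ for all $w\in W$; (b) in that case, $y\in\mathbb{C}^{\omega}$ solves $Ay=g$ if and only if for every $i$ with $j_i\in J$, $$y_{\mu_i}=\mathbf{k}_{j_i}-\sum_{k=0}^{\mu_i-1}h_{j_ik}y_k,$$ where the coordinates $y_s$, $s\in\omega\setminus\{\mu_0,\mu_1,\dots\}$, are arbitrary (and only these occur with possibly nonzero coefficients in the sums). In particular the homogeneous system $Ay=0$ has a nontrivial solution if and only if $\operatorname{def}(A)>0$.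
   Context: $\omega=\{0,1,2,\dots\}$; $\mathbb{C}^{\omega}$ is the space of all complex sequences (written as columns); for a row-finite matrix $A$, $(Ay)_n=\sum_k a_{nk}y_k$ (a finite sum). Row-finite: each row has finitely many nonzero entries; nonsingular: invertible in the algebra of row-finite matrices. Length $\ell(x)$ of a finitely supported sequence $x\neq 0$ is its largest index with nonzero coordinate. Quasi-Hermite form (QHF): with $J$ the indices of nonzero rows and $\ell_j=\ell(H_j)$, (i) $j<j'$ in $J$ implies $\ell_j<\ell_{j'}$; (ii) $h_{j\ell_j}=1$; (iii) $h_{m\ell_j}=0$ for all $m\neq j$. $\operatorname{def}(A)$ is the codimension of the row space of $A$ in the space of finitely supported sequences. *)

From HB Require Import structures.
From mathcomp Require Import all_boot all_order all_algebra.
Set Implicit Arguments. Unset Strict Implicit. Unset Printing Implicit Defensive.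
Import GRing.Theory.
Local Open Scope ring_scope.

Record rfmat (F : fieldType) := RFMat {
  rfm :> nat -> nat -> F;
  rfb : nat -> nat;
  rfbP : forall i k, (rfb i <= k)%N -> rfm i k = 0 }.

Definition mulv (F : fieldType) (A : rfmat F) (y : nat -> F) : nat -> F :=
  fun n => \sum_(k < rfb A n) A n k * y k.

Definition mulm (F : fieldType) (A : rfmat F) (B : nat -> nat -> F)
  : nat -> nat -> F :=
  fun i j => \sum_(k < rfb A i) A i k * B k j.

Definition idm (F : fieldType) : nat -> nat -> F := fun i j => (i == j)%:R.

Definition nonsingular (F : fieldType) (Q : rfmat F) : Prop :=
  exists P : rfmat F,
    (forall i j, mulm P Q i j = idm F i j) /\
    (forall i j, mulm Q P i j = idm F i j).

Definition zero_row (F : fieldType) (x : nat -> F) : Prop := forall k, x k = 0.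

Definition is_len (F : fieldType) (x : nat -> F) (l : nat) : Prop :=
  x l != 0 /\ forall k, (l < k)%N -> x k = 0.

Definition QHF (F : fieldType) (H : nat -> nat -> F) : Prop :=
  forall j l, is_len (H j) l ->
    [/\ H j l = 1,
        (forall m, m <> j -> H m l = 0) &
        (forall j' l', (j < j')%N -> is_len (H j') l' -> (l < l')%N)].

Definition fin_supp (F : fieldType) (x : nat -> F) : Prop :=
  exists N, forall k, (N <= k)%N -> x k = 0.

Definition in_rowspace (F : fieldType) (A : nat -> nat -> F) (x : nat -> F)
  : Prop :=
  exists (N : nat) (c : nat -> F), forall k, x k = \sum_(i < N) c i * A i k.

(* def(A) > 0 : the row space of A has positive codimension in the space
   of finitely supported sequences, i.e. it is a proper subspace. *)
Definition def_pos (F : fieldType) (A : nat -> nat -> F) : Prop :=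
  exists x : nat -> F, fin_supp x /\ ~ in_rowspace A x.

(* Multiplying by the nonsingular Q does not change the solution set, so
   A y = g is equivalent to H y = k.  A zero row of H gives the condition
   k_w = 0.  A nonzero row j with pivot column mu has H_{j,mu} = 1 and vanishes
   beyond mu, so its equation determines y_mu from y_0, ..., y_{mu-1}; as pivot
   columns are pairwise distinct, these equations can be solved by recursion on
   the column index, prescribing the non-pivot coordinates freely.
   For the homogeneous system: if every column is a pivot column, eliminating
   the last coordinate with the pivot row shows that every finitely supported
   sequence lies in the row space of H, hence of A; conversely a non-pivot
   column s yields a solution with y_s = 1, and a kernel vector with y_s <> 0
   is orthogonal to the row space but not to the unit vector e_s. *)
From Stdlib Require Import ClassicalEpsilon Classical.
From HB Require Import structures.
From mathcomp Require Import all_boot all_order all_algebra.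
Import GRing.Theory.
Local Open Scope ring_scope.
Set Implicit Arguments. Unset Strict Implicit.

Section RowFinite.
Variable F : fieldType.

Lemma sum_ord_widen_eq0 (f : nat -> F) b M :
  (forall k, (b <= k)%N -> f k = 0) -> (b <= M)%N ->
  \sum_(k < b) f k = \sum_(k < M) f k.
Proof.
move=> f_eq0 lebM; rewrite (big_ord_widen _ _ lebM) big_mkcond.
by apply: eq_bigr => k _; case: ltnP => // /f_eq0 ->.
Qed.

Lemma idm_sum (y : nat -> F) s M : (s < M)%N ->
  \sum_(k < M) idm F s k * y k = y s.
Proof.
move=> ltsM; rewrite (bigD1 (Ordinal ltsM)) //= /idm eqxx mul1r big1 ?addr0 //.
by move=> k; rewrite eq_sym -val_eqE /= => /negbTE ->; rewrite mul0r.
Qed.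

Lemma eq_mulv (X : rfmat F) u v : u =1 v -> mulv X u =1 mulv X v.
Proof. by move=> euv i; apply: eq_bigr => k _; rewrite euv. Qed.

Definition mulm_bound (X Y : rfmat F) i := (\max_(l < rfb X i) rfb Y l)%N.

Lemma leq_mulm_bound (X Y : rfmat F) i l :
  (l < rfb X i)%N -> (rfb Y l <= mulm_bound X Y i)%N.
Proof.
by move=> ltl; apply: (@leq_bigmax _ (fun l : 'I_(rfb X i) => rfb Y l) (Ordinal ltl)).
Qed.

Lemma mulm_eq0 (X Y : rfmat F) i k :
  (mulm_bound X Y i <= k)%N -> mulm X Y i k = 0.
Proof.
move=> lek; apply: big1 => l _; rewrite (rfbP (r := Y)) ?mulr0 //.
exact: leq_trans (leq_mulm_bound Y (ltn_ord l)) lek.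
Qed.

Lemma mulv_mulv (X Y : rfmat F) (v : nat -> F) i M :
  (mulm_bound X Y i <= M)%N ->
  mulv X (mulv Y v) i = \sum_(k < M) mulm X Y i k * v k.
Proof.
move=> leM; rewrite /mulv /mulm.
transitivity (\sum_(l < rfb X i) \sum_(k < M) X i l * (Y l k * v k)).
  apply: eq_bigr => l _; rewrite mulr_sumr.
  apply: (@sum_ord_widen_eq0 (fun k => X i l * (Y l k * v k)) (rfb Y l)).
    by move=> k lek; rewrite (rfbP (r := Y)) // mul0r mulr0.
  exact: leq_trans (leq_mulm_bound Y (ltn_ord l)) leM.
rewrite exchange_big /=; apply: eq_bigr => k _.
by rewrite mulr_suml; apply: eq_bigr => l _; rewrite mulrA.
Qed.

Lemma zero_rowVis_len (x : nat -> F) b :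
  (forall k, (b <= k)%N -> x k = 0) -> zero_row x \/ exists l, is_len x l.
Proof.
elim: b => [|b IHb] x_eq0; first by left => k; apply: x_eq0.
have [xb0|xb_neq0] := eqVneq (x b) 0; last by right; exists b; split => // k /x_eq0.
by apply: IHb => k; rewrite leq_eqVlt => /orP[/eqP <- //|/x_eq0].
Qed.

Lemma in_rowspace_ext (X : nat -> nat -> F) u v :
  u =1 v -> in_rowspace X v -> in_rowspace X u.
Proof. by move=> euv [N [c hc]]; exists N, c => k; rewrite euv hc. Qed.

Lemma in_rowspace0 (X : nat -> nat -> F) : in_rowspace X (fun _ => 0).
Proof. by exists 0%N, (fun _ => 0) => k; rewrite big_ord0. Qed.

Lemma in_rowspace_comb (X : nat -> nat -> F) u v a :
  in_rowspace X u -> in_rowspace X v -> in_rowspace X (fun k => u k + a * v k).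
Proof.
move=> [N1 [c1 hc1]] [N2 [c2 hc2]].
pose ext N (c : nat -> F) i := if (i < N)%N then c i else 0.
have widen N (c : nat -> F) k : (N <= maxn N1 N2)%N ->
    \sum_(i < N) c i * X i k = \sum_(i < maxn N1 N2) ext N c i * X i k.
  move=> leN; rewrite -(@sum_ord_widen_eq0 (fun i => ext N c i * X i k) N) //.
    by apply: eq_bigr => i _; rewrite /ext ltn_ord.
  by move=> i lei; rewrite /ext ltnNge lei mul0r.
exists (maxn N1 N2), (fun i => ext N1 c1 i + a * ext N2 c2 i) => k.
rewrite hc1 hc2 (widen N1) ?leq_maxl // (widen N2) ?leq_maxr // mulr_sumr -big_split /=.
by apply: eq_bigr => i _; rewrite mulrDl mulrA.
Qed.

Lemma rowspace_orth_kernel (X : rfmat F) y N (c : nat -> F) M :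
  (forall n, mulv X y n = 0) -> (\max_(i < N) rfb X i <= M)%N ->
  \sum_(k < M) (\sum_(i < N) c i * X i k) * y k = 0.
Proof.
move=> Xy0 leM; under eq_bigr do rewrite mulr_suml.
rewrite exchange_big /= big1 // => i _.
rewrite -(@sum_ord_widen_eq0 (fun k => c i * X i k * y k) (rfb X i)).
- under eq_bigr do rewrite -mulrA.
  by rewrite -mulr_sumr -/(mulv X y i) Xy0 mulr0.
- by move=> k lek; rewrite (rfbP (r := X)) // mulr0 mul0r.
- exact: leq_trans (@leq_bigmax _ (fun i : 'I_N => rfb X i) i) leM.
Qed.

End RowFinite.

Section QuasiHermite.
Variables (F : fieldType) (A Q P : rfmat F).
Hypothesis PQ1 : forall i j, mulm P Q i j = idm F i j.
Hypothesis QHF_H : QHF (mulm Q A).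
Local Notation H := (mulm Q A).

Lemma mulv_QA y i M : (forall k, (M <= k)%N -> H i k = 0) ->
  mulv Q (mulv A y) i = \sum_(k < M) H i k * y k.
Proof.
move=> H_eq0; rewrite (mulv_mulv y (leq_maxl (mulm_bound Q A i) M)).
symmetry; apply: (@sum_ord_widen_eq0 _ (fun k => H i k * y k)) (leq_maxr _ _).
by move=> k /H_eq0 ->; rewrite mul0r.
Qed.

Lemma mulv_PQ v i : mulv P (mulv Q v) i = v i.
Proof.
rewrite (mulv_mulv v (leq_maxl (mulm_bound P Q i) i.+1)).
by under eq_bigr do rewrite PQ1; rewrite idm_sum ?leq_maxr.
Qed.

Lemma mulvQ_eq g y :
  (forall n, mulv A y n = g n) <-> (forall i, mulv Q (mulv A y) i = mulv Q g i).
Proof.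
split=> [Ay_g|QAy_Qg] i; first exact: eq_mulv.
by rewrite -mulv_PQ -[g i]mulv_PQ; apply: eq_mulv.
Qed.

Lemma mulv_QA_zero_row y i : zero_row (H i) -> mulv Q (mulv A y) i = 0.
Proof. by move=> Hi0; rewrite (@mulv_QA y i 0) ?big_ord0. Qed.

Lemma H_zero_rowVis_len i : zero_row (H i) \/ exists l, is_len (H i) l.
Proof. exact/(zero_rowVis_len (b := mulm_bound Q A i))/mulm_eq0. Qed.

Lemma pivot_col_eq0 j mu j' mu' :
  is_len (H j) mu -> is_len (H j') mu' -> j <> j' -> H j mu' = 0.
Proof. by move=> _ /QHF_H[_ Hcol0 _] /Hcol0. Qed.

Lemma pivot_row_inj j j' mu : is_len (H j) mu -> is_len (H j') mu -> j = j'.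
Proof.
move=> lenj lenj'; have [//|neq_jj'] := eqVneq j j'.
have [Hj'mu_neq0 _] := lenj'; case/eqP: Hj'mu_neq0.
by apply: pivot_col_eq0 lenj' lenj _ => e; rewrite e eqxx in neq_jj'.
Qed.

Lemma pivot_eqn y kj j mu : is_len (H j) mu ->
  mulv Q (mulv A y) j = kj <-> y mu = kj - \sum_(k < mu) H j k * y k.
Proof.
move=> lenj; have [Hjmu1 _ _] := QHF_H lenj; case: lenj => _ Hj_eq0.
rewrite (@mulv_QA y j mu.+1) => [|k]; last exact: Hj_eq0.
rewrite big_ord_recr /= Hjmu1 mul1r.
by split=> [<-|->]; rewrite addrC ?addrK ?subrK.
Qed.

Definition pivot_row (s : nat) : option nat :=
  match excluded_middle_informative (exists j, is_len (H j) s) with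
  | left ex_j => Some (proj1_sig (constructive_indefinite_description _ ex_j))
  | right _ => None
  end.

Lemma pivot_rowP s : match pivot_row s with
  | Some j => is_len (H j) s
  | None => forall j, ~ is_len (H j) s end.
Proof.
rewrite /pivot_row; case: excluded_middle_informative => [ex_j|no_j].
  by case: constructive_indefinite_description.
by move=> j lenj; apply: no_j; exists j.
Qed.

Section Solution.
Variables kk z : nat -> F.

(* [sol_upto n] agrees with the constructed solution on the columns below n. *)
Fixpoint sol_upto (n : nat) : nat -> F :=
  if n is n'.+1 then fun s =>
    if s == n' then
      if pivot_row n' is Some j then kk j - \sum_(k < n') H j k * sol_upto n' k
      else z n'
    else sol_upto n' s
  else z.

Definition sol s := sol_upto s.+1 s.

Lemma sol_uptoE n k : (k < n)%N -> sol_upto n k = sol k.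
Proof.
elim: n => // n IHn ltkn /=; case: eqP => [->|/eqP neq_kn].
  by rewrite /sol /= eqxx.
by apply: IHn; rewrite ltn_neqAle neq_kn -ltnS.
Qed.

Lemma solE s : sol s =
  if pivot_row s is Some j then kk j - \sum_(k < s) H j k * sol k else z s.
Proof.
rewrite {1}/sol /= eqxx; case: pivot_row => // j.
by congr (_ - _); apply: eq_bigr => k _; rewrite sol_uptoE.
Qed.

Lemma sol_pivot j mu : is_len (H j) mu ->
  sol mu = kk j - \sum_(k < mu) H j k * sol k.
Proof.
move=> lenj; rewrite solE; have := pivot_rowP mu.
by case: pivot_row => [j' /(pivot_row_inj lenj) ->|/(_ j)].
Qed.

Lemma sol_free s : (forall j, ~ is_len (H j) s) -> sol s = z s.
Proof.
move=> no_j; rewrite solE; have := pivot_rowP s.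
by case: pivot_row => // j /no_j.
Qed.

Lemma mulv_QA_sol : (forall w, zero_row (H w) -> kk w = 0) ->
  forall i, mulv Q (mulv A sol) i = kk i.
Proof.
move=> kk_eq0 i; have [Hi0|[l leni]] := H_zero_rowVis_len i.
  by rewrite mulv_QA_zero_row // kk_eq0.
exact/(pivot_eqn _ _ leni)/sol_pivot.
Qed.

End Solution.

Lemma solvable_iff g :
  (exists y, forall n, mulv A y n = g n) <->
  (forall w, zero_row (H w) -> mulv Q g w = 0).
Proof.
split=> [[y /mulvQ_eq QAy_Qg] w Hw0|kk_eq0].
  by rewrite -QAy_Qg mulv_QA_zero_row.
by exists (sol (mulv Q g) (fun _ => 0)); apply/mulvQ_eq/mulv_QA_sol.
Qed.

Lemma solution_iff g y : (exists y, forall n, mulv A y n = g n) ->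
  (forall n, mulv A y n = g n) <->
  (forall j mu, is_len (H j) mu ->
     y mu = mulv Q g j - \sum_(k < mu) H j k * y k).
Proof.
move=> /solvable_iff kk_eq0; rewrite mulvQ_eq.
split=> [QAy_Qg j mu lenj|y_pivot i]; first exact/(pivot_eqn _ _ lenj).
have [Hi0|[l leni]] := H_zero_rowVis_len i.
  by rewrite mulv_QA_zero_row // kk_eq0.
exact/(pivot_eqn _ _ leni)/y_pivot.
Qed.

Lemma solution_with_free_coords g z : (exists y, forall n, mulv A y n = g n) ->
  exists y, (forall n, mulv A y n = g n) /\
            (forall s, (forall j, ~ is_len (H j) s) -> y s = z s).
Proof.
move=> /solvable_iff kk_eq0; exists (sol (mulv Q g) z).
by split; [apply/mulvQ_eq/mulv_QA_sol|apply: sol_free].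
Qed.

Lemma in_rowspace_H j : in_rowspace A (H j).
Proof. by exists (rfb Q j), (Q j). Qed.

Lemma all_pivots_in_rowspace : (forall s, exists j, is_len (H j) s) ->
  forall x, fin_supp x -> in_rowspace A x.
Proof.
move=> all_piv x [N]; elim: N x => [|N IHN] x x_eq0.
  by apply: in_rowspace_ext (in_rowspace0 _) => k; apply: x_eq0.
have [j lenj] := all_piv N; have [HjN1 _ _] := QHF_H lenj; case: lenj => _ Hj_eq0.
apply: (@in_rowspace_ext _ _ _ (fun k => (x k - x N * H j k) + x N * H j k)).
  by move=> k; rewrite subrK.
apply: in_rowspace_comb (in_rowspace_H j); apply: IHN => k.
rewrite leq_eqVlt => /orP[/eqP <-|ltNk]; first by rewrite HjN1 mulr1 subrr.
by rewrite x_eq0 // Hj_eq0 // mulr0 subrr.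
Qed.

Lemma nontrivial_kernel_iff_def_pos :
  (exists y, (exists s, y s != 0) /\ forall n, mulv A y n = 0) <-> def_pos A.
Proof.
split=> [[y [[s ys_neq0] Ay0]]|[x [x_fin x_nrs]]].
  exists (idm F s); split; first by exists s.+1 => k /ltn_eqF; rewrite /idm => ->.
  move=> [N [c hc]]; pose M := maxn s.+1 (\max_(i < N) rfb A i).
  have : \sum_(k < M) idm F s k * y k = 0.
    under eq_bigr do rewrite hc.
    exact: rowspace_orth_kernel (leq_maxr _ _).
  by rewrite idm_sum ?leq_maxl // => ys0; rewrite ys0 eqxx in ys_neq0.
apply: NNPP => no_kernel; apply/x_nrs/all_pivots_in_rowspace => // s.
apply: NNPP => s_free; apply: no_kernel.
have [|y [Ay0 y_free]] := @solution_with_free_coords (fun _ => 0) (idm F s).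
  by exists (fun _ => 0) => n; apply: big1 => k _; rewrite mulr0.
exists y; split=> //; exists s; rewrite y_free /idm ?eqxx ?oner_neq0 //.
by move=> j lenj; apply: s_free; exists j.
Qed.

End QuasiHermite.

Theorem mainTheorem4 (F : fieldType) (A Q : rfmat F) (g : nat -> F) :
  nonsingular Q -> QHF (mulm Q A) ->
  let H := mulm Q A in
  let kk := mulv Q g in
  (* (a) solvability criterion *)
  ((exists y, forall n, mulv A y n = g n) <->
     (forall w, zero_row (H w) -> kk w = 0)) /\
  (* (b) description of all solutions *)
  ((exists y, forall n, mulv A y n = g n) ->
     (forall y, (forall n, mulv A y n = g n) <->
        (forall j mu, is_len (H j) mu ->
           y mu = kk j - \sum_(k < mu) H j k * y k)) /\
     (* the non-pivot coordinates are arbitrary: *)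
     (forall z : nat -> F, exists y,
        (forall n, mulv A y n = g n) /\
        (forall s, (forall j, ~ is_len (H j) s) -> y s = z s)) /\
     (* only non-pivot coordinates occur with nonzero coefficients *)
     (forall j mu j' mu', is_len (H j) mu -> is_len (H j') mu' -> j <> j' ->
        H j mu' = 0)) /\
  (* homogeneous case *)
  ((exists y, (exists s, y s != 0) /\ forall n, mulv A y n = 0) <->
     def_pos A).
Proof.
move=> [P [PQ1 _]] QHF_H H kk.
split; first exact: solvable_iff PQ1 QHF_H g.
split; last exact: nontrivial_kernel_iff_def_pos PQ1 QHF_H.
move=> solvable; split; first by move=> y; exact: solution_iff.
split; first by move=> z; exact: solution_with_free_coords.
exact: pivot_col_eq0.
Qed.
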